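(* Work in the category of all topological spaces. Let $S=\{o,c\}$ be the Sierpinski space with $\{o\}$ open and $c$ closed (so $c\in\overline{\{o\}}$), and let $\iota:\{o\}\to S$ be the inclusion of the open point. Let $Q$ be the class of those continuous maps $p:X\to Y$ belonging to $\{\iota\}^{r}$ such that both $X$ and $Y$ have fewer than $5$ points. Then: (a) every map in $(Q)^{lr}$ is proper; (b) a continuous map between ''nice'' spaces is proper iff it belongs to $(Q)^{lr}$; (c) in particular, a Hausdorff space $K$ is compact iff the map $K\to\{o\}$ to a one-point space belongs to $(Q)^{lr}$.
   Context: For morphisms $i:A\to B$ and $p:X\to Y$, $i\rightthreetimes p$ means: for all $f:A\to X$, $g:B\to Y$ with $p\circ f=g\circ i$ there is $h:B\to X$ with $h\circ i=f$ and $p\circ h=g$. For a class $P$, $P^{l}=\{i:\ i\rightthreetimes p\ \forall p\in P\}$, $P^{r}=\{p:\ i\rightthreetimes p\ \forall i\in P\}$, and $P^{lr}=(P^{l})^{r}$. A continuous map $f:X\to Y$ is proper (in the sense of Bourbaki) if for every topological space $Z$ the map $f\times\mathrm{id}_Z:X\times Z\to Y\times Z$ is closed. A space is ''nice'' if it is Hausdorff and hereditarily normal (every subspace is normal). Compact means every open cover has a finite subcover. *)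

From HB Require Import structures.
From mathcomp Require Import all_boot all_order all_algebra.
From mathcomp Require Import all_classical all_reals.
From mathcomp Require Import topology.
From mathcomp Require Import subtype_topology.
Set Implicit Arguments. Unset Strict Implicit. Unset Printing Implicit Defensive.
Local Open Scope classical_set_scope.

Record Mor := MkMor {
  mdom : topologicalType;
  mcod : topologicalType;
  mfun : mdom -> mcod;
  mcont : continuous mfun }.
Arguments mfun : clear implicits.
Arguments mcont : clear implicits.

Definition lifts (i p : Mor) : Prop :=
  forall (f : mdom i -> mdom p) (g : mcod i -> mcod p),
    continuous f -> continuous g ->
    mfun p \o f = g \o mfun i ->
    exists h : mcod i -> mdom p,
      continuous h /\ h \o mfun i = f /\ mfun p \o h = g.

Definition lclass (P : Mor -> Prop) : Mor -> Prop :=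
  fun i => forall p, P p -> lifts i p.
Definition rclass (P : Mor -> Prop) : Mor -> Prop :=
  fun p => forall i, P i -> lifts i p.
Definition lrclass (P : Mor -> Prop) : Mor -> Prop := rclass (lclass P).

(** Sierpinski space S = {o, c}: carrier bool, o := true, c := false;
    topology generated by the single open set {o}
    (so the opens are set0, [set o], setT). *)
Definition sierpinski : Type := bool.
HB.instance Definition _ := Choice.copy sierpinski bool.
HB.instance Definition _ := isSubBaseTopological.Build sierpinski
  (@setT unit) (fun _ : unit => [set true : sierpinski]).

Definition s_o : sierpinski := true.
Definition s_c : sierpinski := false.

Definition open_pt : topologicalType := set_type [set s_o].
Definition iota_fun : open_pt -> sierpinski := set_val.
Lemma iota_cont : continuous iota_fun.
Proof. exact: (@initial_continuous _ sierpinski set_val). Qed.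
Definition iota : Mor := MkMor iota_cont.

Definition fewer_than_5 (X : topologicalType) : Prop :=
  exists s : seq X, (size s < 5)%N /\ forall x : X, x \in s.

Definition Q : Mor -> Prop := fun p =>
  rclass (fun i => i = iota) p /\ fewer_than_5 (mdom p) /\ fewer_than_5 (mcod p).

Definition closed_map (A B : topologicalType) (f : A -> B) : Prop :=
  forall C : set A, closed C -> closed (f @` C).

Definition proper_map (X Y : topologicalType) (f : X -> Y) : Prop :=
  forall Z : topologicalType,
    closed_map (fun xz : X * Z => (f xz.1, xz.2)).

Definition nice (X : topologicalType) : Prop :=
  hausdorff_space X /\ forall A : set X, normal_space (set_type A).

Definition pt_o : open_pt := exist _ s_o (mem_set erefl).
Definition to_pt (K : topologicalType) : K -> open_pt := fun _ => pt_o.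
Lemma to_pt_cont (K : topologicalType) : continuous (@to_pt K).
Proof. move=> x; exact: cvg_cst. Qed.

From Pilot Require Import Defs.
From HB Require Import structures.
From mathcomp Require Import all_boot all_order all_algebra.
From mathcomp Require Import all_classical all_reals.
From mathcomp Require Import topology.
From mathcomp Require Import subtype_topology.
From mathcomp Require Import finmap.
Set Implicit Arguments. Unset Strict Implicit. Unset Printing Implicit Defensive.
Local Open Scope classical_set_scope.

(* A map in Q^l has dense image (test against the map from {o} onto the closed
   point of S) and extends continuous maps into the three-point space [vee]
   (test against [vee -> {o}]).  Conversely, since a map in Q has a finite
   domain and lifts specializations, Q^l contains the inclusion of a discrete
   set D into D + {oo} whenever the neighbourhoods of oo come from an
   ultrafilter on D; lifting against these inclusions makes ultrafilters
   converging downstairs converge upstairs, which yields (a).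
   For (b) and (c), let f be proper with Hausdorff regular domain and take a
   square from i in Q^l.  At each b, pushing the trace of the neighbourhoods
   of b along the top map gives a proper filter whose image converges, so it
   has a cluster point over the bottom map; [vee]-valued extensions separate
   any two such cluster points, so it is a limit, and regularity makes the
   resulting diagonal continuous.  Nice and compact Hausdorff spaces are
   regular. *)

Definition specializes (T : topologicalType) (x y : T) : Prop :=
  forall V, open V -> V y -> V x.

Lemma continuous_specializes (T U : topologicalType) (h : T -> U) (x y : T) :
  continuous h -> specializes x y -> specializes (h x) (h y).
Proof.
by move=> ch xy V oV Vhy; apply: (xy (h @^-1` V)) => //; move/continuousP: ch; apply.
Qed.

Lemma sierpinski_open_o : open [set s_o].
Proof.
exists [set [set s_o]]; last first.
  by apply/seteqP; split=> [y [B -> //]|y ->]; exists [set s_o].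
move=> _ ->; exists [fset tt]%fset; first by move=> ? _; rewrite in_setT.
apply/seteqP; split=> [y /(_ tt) -> //|y -> i]; by rewrite /= inE.
Qed.

Lemma sierpinski_open_c (U : set sierpinski) : open U -> U s_c -> U = setT.
Proof.
move=> [D sD <-] [B DB Bc]; apply/seteqP; split=> // x _.
exists B => //; have [DA _ EB] := sD _ DB.
by move: Bc; rewrite /= -EB => Bc i iDA; have := Bc i iDA.
Qed.

Lemma specializes_o_c : specializes s_o s_c.
Proof. by move=> V oV Vc; rewrite (sierpinski_open_c oV Vc). Qed.

Lemma specializes_from_c (t : sierpinski) : specializes s_c t -> t = s_c.
Proof. by case: t => // /(_ _ sierpinski_open_o erefl). Qed.

Lemma sierpinski_continuous (T : topologicalType) (g : T -> sierpinski) :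
  open (g @^-1` [set s_o]) -> continuous g.
Proof.
move=> og; apply/continuousP => U oU.
have [Uc|nUc] := pselect (U s_c).
  by rewrite (sierpinski_open_c oU Uc) preimage_setT; exact: openT.
have [Uo|nUo] := pselect (U s_o).
  suff -> : g @^-1` U = g @^-1` [set s_o] by [].
  by apply/seteqP; split=> x /=; case: (g x) => //; rewrite /s_o.
suff -> : g @^-1` U = set0 by exact: open0.
by apply/seteqP; split=> x //=; case: (g x).
Qed.

Lemma continuous_specialization_path (T : topologicalType) (x y : T) :
  specializes x y -> continuous (fun t : sierpinski => if t then x else y).
Proof.
move=> xy; set c := fun t : sierpinski => _; apply/continuousP => V oV.
have [Vy|nVy] := pselect (V y).
  suff -> : c @^-1` V = setT by exact: openT.
  by apply/seteqP; split=> // -[] _ /=; [exact: xy|].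
have [Vx|nVx] := pselect (V x).
  suff -> : c @^-1` V = [set s_o] by exact: sierpinski_open_o.
  by apply/seteqP; split=> -[].
suff -> : c @^-1` V = set0 by exact: open0.
by apply/seteqP; split=> -[].
Qed.

Lemma open_pt_eq (w : open_pt) : w = pt_o.
Proof. by apply: val_inj; case: w => x /= /set_mem ->. Qed.

Lemma iota_fun_o (w : open_pt) : iota_fun w = s_o.
Proof. by rewrite (open_pt_eq w). Qed.

Lemma lifts_iota_specializes (p : Mor) : lifts Defs.iota p ->
  forall x y, specializes (mfun p x) y ->
  exists2 x', specializes x x' & mfun p x' = y.
Proof.
move=> ip x y pxy.
have sq : mfun p \o (fun=> x) =
    (fun t : sierpinski => if t then mfun p x else y) \o iota_fun.
  by apply: funext => w /=; rewrite iota_fun_o.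
have [h [ch [hi ph]]] := ip _ _ (@cst_continuous _ _ x)
  (continuous_specialization_path pxy) sq.
exists (h s_c); last exact: (congr1 (fun k => k s_c) ph).
rewrite -(congr1 (fun k => k pt_o) hi).
exact: (continuous_specializes ch specializes_o_c).
Qed.

(* [None] is the open point; the two closed points [Some true] and
   [Some false] both lie in its closure. *)
Definition vee : Type := option bool.
HB.instance Definition _ := Choice.copy vee (option bool).

Definition vee_open : set_system vee := fun U => forall s, U (Some s) -> U None.

Lemma vee_openT : vee_open setT. Proof. by []. Qed.

Lemma vee_openI : setI_closed vee_open.
Proof. by move=> A B oA oB s [/oA ? /oB ?]. Qed.

Lemma vee_open_bigU (I : Type) (f : I -> set vee) :
  (forall i, vee_open (f i)) -> vee_open (\bigcup_i f i).
Proof. by move=> fo s [i _ fi]; exists i => //; exact: fo fi. Qed.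

HB.instance Definition _ := isOpenTopological.Build vee vee_openT vee_openI vee_open_bigU.

Lemma vee_open_neq (s : bool) : open [set z : vee | z <> Some s].
Proof. by []. Qed.

Lemma vee_continuous (T : topologicalType) (phi : T -> vee) :
  (forall s, open (phi @^-1` [set z | z <> Some s])) -> continuous phi.
Proof.
move=> ophi; apply/continuousP => U oU; rewrite openE => x /= Ux.
have nbhs_neq s : phi x <> Some s -> nbhs x (phi @^-1` [set z | z <> Some s]).
  by move=> ?; apply: open_nbhs_nbhs; split.
case Ex: (phi x) Ux => [s|] Ux.
  have ns : phi x <> Some (~~ s) by rewrite Ex; case: s {Ex Ux}.
  apply: filterS (nbhs_neq _ ns) => y /=; case: (phi y) => [t t_neq|_]; last exact: oU Ux.
  suff -> : t = s by [].
  by case: s t t_neq {Ex Ux ns} => [] [].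
have [nt nf] : phi x <> Some true /\ phi x <> Some false by rewrite Ex.
apply: filterS (filterI (nbhs_neq _ nt) (nbhs_neq _ nf)) => y [] /=.
by case: (phi y) => [[]|].
Qed.

Lemma fewer_than_5_open_pt : fewer_than_5 open_pt.
Proof. by exists [:: pt_o]; split => // x; rewrite (open_pt_eq x) inE. Qed.

Lemma Q_vee_to_pt : Q (MkMor (@cst_continuous vee open_pt pt_o)).
Proof.
split; last split.
- move=> _ -> f g _ _ _; exists (fun=> f pt_o); split; first exact: cst_continuous.
  split; apply: funext => x /=; first by rewrite (open_pt_eq x).
  by rewrite (open_pt_eq (g x)).
- by exists [:: None; Some true; Some false]; split => // -[[]|].
- exact: fewer_than_5_open_pt.
Qed.

Lemma Q_pt_to_c : Q (MkMor (@cst_continuous open_pt sierpinski s_c)).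
Proof.
split; last split.
- move=> _ -> f g _ cg sq.
  have go : g s_o = s_c by have := congr1 (fun k => k pt_o) sq.
  have gc : g s_c = s_c.
    apply: specializes_from_c; rewrite -[X in specializes X]go.
    exact: continuous_specializes cg specializes_o_c.
  exists (fun=> pt_o); split; first exact: cst_continuous.
  split; apply: funext => x /=; first by rewrite (open_pt_eq (f x)).
  by case: x; rewrite ?go ?gc.
- exact: fewer_than_5_open_pt.
- by exists [:: s_o; s_c]; split => // -[].
Qed.

Lemma lclassQ_dense (i : Mor) : lclass Q i ->
  forall (b : mcod i) N, nbhs b N -> exists a, N (mfun i a).
Proof.
move=> iQ b N /nbhs_interior/nbhs_singleton Nb; apply: contrapT => nN.
pose g (y : mcod i) : sierpinski := `[< N° y >].
have cg : continuous g.
  apply: sierpinski_continuous.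
  suff -> : g @^-1` [set s_o] = N° by exact: open_interior.
  by apply/seteqP; split=> y; rewrite /g /=; case: asboolP.
have sq : (fun=> s_c) \o (fun=> pt_o) = g \o mfun i.
  apply: funext => a /=; rewrite /g; case: asboolP => // /interior_subset Na.
  by case: nN; exists a.
have [h [_ [_ /(congr1 (fun k => k b))]]] :=
  iQ _ Q_pt_to_c _ _ (@cst_continuous _ _ pt_o) cg sq.
by rewrite /= /g; case: asboolP.
Qed.

Lemma lclassQ_extend_vee (i : Mor) : lclass Q i ->
  forall phi : mdom i -> vee, continuous phi ->
  exists2 psi : mcod i -> vee, continuous psi & psi \o mfun i = phi.
Proof.
move=> iQ phi cphi.
have [h [ch [hi _]]] :=
  iQ _ Q_vee_to_pt phi (fun=> pt_o) cphi (@cst_continuous _ _ pt_o) erefl.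
by exists h.
Qed.

Definition trace_nbhs (A : Type) (B : topologicalType) (i : A -> B) (b : B) :
    set_system A :=
  filter_from (nbhs b) (fun N => i @^-1` N).

Section trace_nbhs.
Context (A : Type) (B : topologicalType) (i : A -> B).

Global Instance trace_nbhs_filter (b : B) : Filter (trace_nbhs i b).
Proof.
apply: filter_from_filter; first by exists setT; exact: filterT.
by move=> N1 N2 n1 n2; exists (N1 `&` N2) => //; exact: filterI.
Qed.

Lemma trace_nbhs_proper (b : B) :
  (forall N, nbhs b N -> exists a, N (i a)) -> ProperFilter (trace_nbhs i b).
Proof. by move=> dense; apply: filter_from_proper => N /dense. Qed.

Lemma cvg_trace_nbhs (b : B) : i @ trace_nbhs i b --> b.
Proof. by move=> N nN; exists N. Qed.

End trace_nbhs.

Lemma cluster_trace_nbhs (A B X : topologicalType) (i : A -> B) (u : A -> X) (a : A) :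
  continuous i -> continuous u -> cluster (u @ trace_nbhs i (i a)) (u a).
Proof.
move=> ci cu S W [N nN NS] nW.
have n1 : nbhs a (i @^-1` N) by exact: ci.
have n2 : nbhs a (u @^-1` W) by exact: cu.
have [a' [Na' Wa']] := filter_ex (filterI n1 n2).
by exists (u a'); split => //; exact: NS.
Qed.

Lemma lclassQ_trace_proper (i : Mor) (b : mcod i) :
  lclass Q i -> ProperFilter (trace_nbhs (mfun i) b).
Proof. by move=> iQ; apply: trace_nbhs_proper; exact: lclassQ_dense. Qed.

Lemma regular_closed_nbhs (X : topologicalType) (x : X) (V : set X) :
  regular_space X -> nbhs x V -> exists C, [/\ closed C, nbhs x C & C `<=` V].
Proof.
move=> rX /rX [W nW WV]; exists (closure W); split => //; first exact: closed_closure.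
by apply: filterS nW; exact: subset_closure.
Qed.

Lemma separate_closed_nbhs (X : topologicalType) (x1 x2 : X) :
  hausdorff_space X -> regular_space X -> x1 <> x2 ->
  exists C1 C2 : set X,
    [/\ closed C1, closed C2, nbhs x1 C1, nbhs x2 C2 & C1 `&` C2 = set0].
Proof.
move=> + rX /eqP; rewrite open_hausdorff => /[apply].
move=> [[U1 U2] /= [/set_mem x1U /set_mem x2U] [oU1 oU2 /eqP U0]].
have [C1 [cC1 nC1 sC1]] := regular_closed_nbhs rX (open_nbhs_nbhs (conj oU1 x1U)).
have [C2 [cC2 nC2 sC2]] := regular_closed_nbhs rX (open_nbhs_nbhs (conj oU2 x2U)).
exists C1, C2; split => //; rewrite -subset0 -U0.
by move=> y [/sC1 ? /sC2 ?].
Qed.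

(* Separating two cluster points by closed neighbourhoods [C1], [C2] gives a
   map to [vee]; its extension along [i] sends [b] to a point of the open set
   [z <> Some true] or of [z <> Some false], and so [u] eventually avoids [C1]
   or [C2]. *)
Lemma lclassQ_cluster_unique (i : Mor) (X : topologicalType) (u : mdom i -> X)
    (b : mcod i) :
  lclass Q i -> continuous u -> hausdorff_space X -> regular_space X ->
  forall x1 x2, cluster (u @ trace_nbhs (mfun i) b) x1 ->
  cluster (u @ trace_nbhs (mfun i) b) x2 -> x1 = x2.
Proof.
move=> iQ cu hX rX x1 x2 c1 c2; apply: contrapT => n12.
have [C1 [C2 [cC1 cC2 nC1 nC2 C12]]] := separate_closed_nbhs hX rX n12.
pose q (y : X) : vee :=
  if `[< C1 y >] then Some true else if `[< C2 y >] then Some false else None.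
have C1C2 : C1 `<=` ~` C2 by apply/disjoints_subset.
have qE s : q @^-1` [set z | z <> Some s] = ~` (if s then C1 else C2).
  apply/seteqP; split=> y; rewrite /q /=;
    case: (asboolP (C1 y)) => C1y; case: (asboolP (C2 y)) => C2y; case: s => //= _.
  exact: C1C2.
have cq : continuous q.
  by apply: vee_continuous => s; rewrite qE; apply: closed_openC; case: s.
have [psi cpsi psiE] :=
  lclassQ_extend_vee iQ (fun a => continuous_comp (cu a) (cq (u a))).
have avoid s :
    psi b <> Some s -> (u @ trace_nbhs (mfun i) b) (~` (if s then C1 else C2)).
  move=> psib; rewrite -qE.
  have : (psi \o mfun i) @ trace_nbhs (mfun i) b --> psi b.
    by apply: continuous_cvg; [exact: cpsi|exact: cvg_trace_nbhs].
  rewrite psiE; apply; apply: open_nbhs_nbhs; split => //; exact: vee_open_neq.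
have [s psib] : exists s, psi b <> Some s.
  by case: (psi b) => [[]|]; [exists false|exists true..].
case: s {psib} (avoid s psib) => avoid_s.
- by have [y []] := c1 _ _ avoid_s nC1.
- by have [y []] := c2 _ _ avoid_s nC2.
Qed.

(* The points [Some d] are isolated, and the neighbourhoods of [None] trace
   the filter [F] on [D]. *)
Definition adjoin_limit (D : choiceType) (F : filter_on D) : Type := option D.
HB.instance Definition _ (D : choiceType) (F : filter_on D) :=
  Choice.copy (adjoin_limit F) (option D).

Section adjoin_limit.
Context (D : choiceType) (F : filter_on D).

Definition adjoin_limit_open : set_system (adjoin_limit F) :=
  fun U => U None -> (F : set_system D) [set d | U (Some d)].

Lemma adjoin_limit_openT : adjoin_limit_open setT.
Proof. by move=> _; exact: filterT. Qed.

Lemma adjoin_limit_openI : setI_closed adjoin_limit_open.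
Proof. by move=> A B oA oB [/oA FA /oB FB]; exact: filterI. Qed.

Lemma adjoin_limit_open_bigU (I : Type) (f : I -> set (adjoin_limit F)) :
  (forall i, adjoin_limit_open (f i)) -> adjoin_limit_open (\bigcup_i f i).
Proof. by move=> fo [i _ fi]; apply: filterS (fo i fi) => d fid; exists i. Qed.

HB.instance Definition _ := isOpenTopological.Build (adjoin_limit F)
  adjoin_limit_openT adjoin_limit_openI adjoin_limit_open_bigU.

Lemma adjoin_limit_openE (U : set (adjoin_limit F)) : open U <-> adjoin_limit_open U.
Proof. by []. Qed.

Lemma some_cvg_None : Some @ F --> (None : adjoin_limit F).
Proof.
move=> A; rewrite nbhsE => -[O [/adjoin_limit_openE oO ON] OA].
by apply: filterS (oO ON) => d /OA.
Qed.

Lemma some_continuous : continuous (Some : discrete_topology D -> adjoin_limit F).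
Proof. by apply/continuousP => U _; exact: discrete_open. Qed.

Definition limit_inclusion : Mor := MkMor some_continuous.

End adjoin_limit.

Lemma ultra_seq_fiber (A : Type) (T : eqType) (W : set_system A) (f : A -> T)
    (s : seq T) :
  UltraFilter W -> W [set a | f a \in s] -> exists x, W [set a | f a = x].
Proof.
move=> UW; elim: s => [|x s IH] Ws.
  by case: (@filter_not_empty _ W _); apply: filterS Ws.
have [Wx|Wnx] := in_ultra_setVsetC [set a | f a = x] UW; first by exists x.
apply: IH; apply: filterS (filterI Ws Wnx) => a [/=].
by rewrite in_cons => /orP [/eqP|].
Qed.

(* A finite domain lets the ultrafilter pick one point [x0] upstairs; lifting
   against [iota] then produces the value at the limit point. *)
Lemma lclassQ_limit_inclusion (D : choiceType) (F : filter_on D) :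
  UltraFilter F -> lclass Q (limit_inclusion F).
Proof.
move=> UF p [pQ [[s [_ sP]] _]] f g _ cg sq.
have fg d : mfun p (f d) = g (Some d) by have := congr1 (fun k => k d) sq.
have [x0 Fx0] : exists x0, (F : set_system D) [set d | f d = x0].
  apply: (ultra_seq_fiber (f := f) (s := s)) => //.
  by apply: filterS filterT => d _; exact: sP.
have x0g : specializes (mfun p x0) (g None).
  move=> V oV Vg.
  have /adjoin_limit_openE/(_ Vg) FV : open (g @^-1` V) by move/continuousP: cg; apply.
  by have [d [/= Vd <-]] := filter_ex (filterI FV Fx0); rewrite fg.
have [x1 x0x1 px1] := lifts_iota_specializes (pQ _ erefl) x0g.
exists (fun o => if o is Some d then f d else x1); split; last split.
- apply/continuousP => V oV; apply/adjoin_limit_openE => /= /(x0x1 _ oV) Vx0.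
  by apply: filterS Fx0 => d /= ->.
- by apply: funext.
- by apply: funext => -[d|] //=; exact: fg.
Qed.

Lemma nbhs_setX (X Z : topologicalType) (x : X) (z : Z) (A : set X) (B : set Z) :
  nbhs x A -> nbhs z B -> nbhs (x, z) (A `*` B).
Proof. by move=> nA nB; exists (A, B). Qed.

Lemma nbhs_pairP (X Z : topologicalType) (x : X) (z : Z) (M : set (X * Z)) :
  nbhs (x, z) M -> exists A B, [/\ nbhs x A, nbhs z B & A `*` B `<=` M].
Proof. by move=> [[A B] [nA nB] AB]; exists A, B. Qed.

Lemma lrclassQ_lift_ultra (p : Mor) (D : choiceType) (W : set_system D)
    (u : D -> mdom p) (y : mcod p) :
  lrclass Q p -> UltraFilter W -> (mfun p \o u) @ W --> y ->
  exists2 x, u @ W --> x & mfun p x = y.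
Proof.
move=> pQ UW uy; pose F := FilterType W (@filter_filter _ _ (@ultra_proper _ _ UW)).
pose v (o : adjoin_limit F) : mcod p := if o is Some d then mfun p (u d) else y.
have cu : continuous (u : discrete_topology D -> mdom p).
  by apply/continuousP => V _; exact: discrete_open.
have cv : continuous v.
  apply/continuousP => V oV; apply/adjoin_limit_openE => /= Vy.
  exact: uy (open_nbhs_nbhs (conj oV Vy)).
have [h [ch [hu ph]]] := pQ _ (@lclassQ_limit_inclusion _ F UW) u v cu cv erefl.
exists (h None); last exact: (congr1 (fun k => k None) ph).
rewrite -hu; apply: continuous_cvg; [exact: ch|exact: some_cvg_None].
Qed.

Lemma lrclassQ_proper (p : Mor) : lrclass Q p -> proper_map (mfun p).
Proof.
move=> pQ Z C cC [y z] cl.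
pose g (w : mdom p * Z) := (mfun p w.1, w.2).
pose G := within C (trace_nbhs g (y, z)).
have PG : ProperFilter G.
  apply: Build_ProperFilter_ex => P [N nN NP].
  by have [_ [[w Cw <-] Nw]] := cl N nN; exists w; exact: NP.
have [W [UW GW]] := ultraFilterLemma PG.
have Wg M : nbhs (y, z) M -> W (g @^-1` M) by move=> nM; apply: GW; exists M.
have [x fstx px] : exists2 x, fst @ W --> x & mfun p x = y.
  apply: (lrclassQ_lift_ultra pQ UW) => V nV.
  suff : W [set w | V (mfun p w.1)] by [].
  by apply: filterS (Wg _ (nbhs_setX nV (filterT : nbhs z setT))) => w [].
exists (x, z); last by rewrite /g /= px.
apply: cC => M /nbhs_pairP [A [B [nA nB AB]]].
have WB : W [set w | B w.2].
  by apply: filterS (Wg _ (nbhs_setX (filterT : nbhs y setT) nB)) => w [].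
have WA : W [set w | A w.1] by exact: fstx.
have [w [[Aw Bw] Cw]] := filter_ex (filterI (filterI WA WB) (GW _ (withinT _ _))).
by exists w; split => //; exact: AB.
Qed.

Definition cluster_lifting (X Y : topologicalType) (f : X -> Y) : Prop :=
  forall F : set_system X, ProperFilter F ->
  forall y, f @ F --> y -> exists2 x, cluster F x & f x = y.

(* Apply properness with [Z] the space adjoining the limit of [F] to [X] and
   the closure of the graph of [Some]. *)
Lemma proper_cluster_lifting (X Y : topologicalType) (f : X -> Y) :
  proper_map f -> cluster_lifting f.
Proof.
move=> pf F PF y fy; pose L := FilterType F (@filter_filter _ _ PF).
pose graph : set (X * adjoin_limit L) := [set w | w.2 = Some w.1].
have : closure [set (f w.1, w.2) | w in closure graph] (y, None).
  move=> M /nbhs_pairP [A [B [nA nB AB]]].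
  have FA : F (f @^-1` A) by exact: fy.
  have FB : F [set d | B (Some d)] := some_cvg_None nB.
  have [d [Ad Bd]] := filter_ex (filterI FA FB).
  exists (f d, Some d); split; last exact: AB.
  by exists (d, Some d) => //; exact: subset_closure.
move=> /(pf _ _ (@closed_closure _ graph)) [[x o] xo_graph [/= fx oN]].
exists x => // S T FS nT; rewrite {}oN in xo_graph.
pose U (o : adjoin_limit L) := if o is Some d then S d else True.
have nU : nbhs (None : adjoin_limit L) U.
  by apply: open_nbhs_nbhs; split => //; apply/adjoin_limit_openE.
have [[x' o'] [eo [Tx' Ux']]] := xo_graph _ (nbhs_setX nT nU).
by exists x'; move: Ux'; rewrite /graph /= in eo *; rewrite eo.
Qed.

Lemma cvg_cluster_proper (X : topologicalType) (F : set_system X) (x : X) :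
  ProperFilter F -> F --> x -> cluster F x.
Proof. by move=> PF Fx A B FA /Fx FB; exact: filter_ex (filterI FA FB). Qed.

Lemma cvg_unique_cluster (X : topologicalType) (F : set_system X) (x : X) :
  Filter F -> (forall G, ProperFilter G -> F `<=` G -> exists x', cluster G x') ->
  (forall x', cluster F x' -> x' = x) -> F --> x.
Proof.
move=> FF Gcluster uniq V nV; apply: contrapT => nFV.
have PG : ProperFilter (within (~` V) F).
  apply: Build_ProperFilter_ex => P FP.
  have {}FP : F [set y | ~ V y -> P y] := FP.
  apply: contrapT => nP; apply: nFV; apply: filterS FP => y nVP.
  by apply: contrapT => nVy; apply: nP; exists y; exact: nVP.
have [x' cx'] := Gcluster _ PG (fun P FP => filterS (fun y Py _ => Py) FP).
have x'x : x' = x.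
  by apply: uniq; move: cx'; apply: cvg_cluster; exact: cvg_within.
rewrite {}x'x in cx'.
by have [y []] := cx' _ _ (withinT _ _) nV.
Qed.

Lemma continuous_trace_limit (A B X : topologicalType) (i : A -> B) (u : A -> X)
    (h : B -> X) :
  regular_space X -> (forall b, ProperFilter (trace_nbhs i b)) ->
  (forall b, u @ trace_nbhs i b --> h b) -> continuous h.
Proof.
move=> rX Tp uh b V nV.
have [C [cC nC CV]] := regular_closed_nbhs rX nV.
have [N nN NC] := uh b _ nC.
apply: filterS (nbhs_interior nN) => b' nN'; apply: CV.
by apply: (closed_cvg C cC _ _ (uh b')); exists N.
Qed.

Lemma cluster_lifting_lrclassQ (X Y : topologicalType) (f : X -> Y) (cf : continuous f) :
  hausdorff_space X -> regular_space X -> cluster_lifting f -> lrclass Q (MkMor cf).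
Proof.
move=> hX rX lf i iQ u v cu cv sq.
have Tp b := lclassQ_trace_proper b iQ.
have uniq b := lclassQ_cluster_unique (b := b) iQ cu hX rX.
have fuv b : f @ (u @ trace_nbhs (mfun i) b) --> v b.
  have : (v \o mfun i) @ trace_nbhs (mfun i) b --> v b.
    by apply: continuous_cvg; [exact: cv|exact: cvg_trace_nbhs].
  by rewrite -sq.
have lim b : exists x, u @ trace_nbhs (mfun i) b --> x /\ f x = v b.
  have [x cx fx] := lf _ _ _ (fuv b); exists x; split => //.
  apply: cvg_unique_cluster => [G PG sG|x' cx']; last exact: uniq cx' cx.
  have [x'' cx'' _] := lf G PG (v b) (cvg_trans (cvg_app f sG) (fuv b)).
  by exists x''.
have [h hP] := choice lim.
exists h; split; last split.
- exact: continuous_trace_limit rX Tp (fun b => (hP b).1).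
- apply: funext => a; apply: (uniq (mfun i a)).
    exact: cvg_cluster_proper (hP _).1.
  exact: cluster_trace_nbhs (mcont i) cu.
- by apply: funext => b; exact: (hP b).2.
Qed.

Lemma nice_regular (X : topologicalType) : nice X -> regular_space X.
Proof.
move=> [hX /(_ setT) nT] x V nV.
pose e (y : X) : set_type (@setT X) := exist _ y (mem_set I).
have cval : continuous (set_val : set_type setT -> X) := @initial_continuous _ X set_val.
have ce : continuous e.
  apply/continuousP => _ [O oO <-].
  by have -> : e @^-1` (set_val @^-1` O) = O.
have cx : closed [set e x].
  have -> : [set e x] = set_val @^-1` [set x].
    by apply/seteqP; split => [y /= -> //|y /= yx]; exact: val_inj.
  apply: preimage_closed; first by move=> y _; exact: cval.
  exact/accessible_closed_set1/hausdorff_accessible.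
have [W sW WV] : filter_from (set_nbhs [set e x]) closure (set_val @^-1` V).
  by apply: (nT _ cx) => _ ->; exact: cval.
exists (e @^-1` closure W).
  by apply: ce; apply: filterS (sW (e x) erefl); exact: subset_closure.
have /closure_id <- : closed (e @^-1` closure W).
  by apply: preimage_closed; [move=> y _; exact: ce|exact: closed_closure].
by move=> y /WV.
Qed.

Lemma compact_cluster_lifting_to_pt (K : topologicalType) :
  compact [set: K] <-> cluster_lifting (@to_pt K).
Proof.
split=> [cK F PF y _|lK F PF _].
  have [x [_ cx]] := cK F PF filterT.
  by exists x => //; rewrite (open_pt_eq y) (open_pt_eq (to_pt x)).
by have [x cx _] := lK F PF pt_o (cvg_cst _); exists x.
Qed.

Theorem mainTheorem2 :
  (forall p : Mor, lrclass Q p -> proper_map (mfun p)) /\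
  (forall (X Y : topologicalType) (f : X -> Y) (cf : continuous f),
      nice X -> nice Y -> (proper_map f <-> lrclass Q (MkMor cf))) /\
  (forall K : topologicalType, hausdorff_space K ->
      (compact [set: K] <-> lrclass Q (MkMor (@to_pt_cont K)))).
Proof.
split; [|split].
- exact: lrclassQ_proper.
- move=> X Y f cf nX _; split=> [pf|/lrclassQ_proper //].
  exact: cluster_lifting_lrclassQ nX.1 (nice_regular nX) (proper_cluster_lifting pf).
- move=> K hK; split=> [cK|/lrclassQ_proper/proper_cluster_lifting lK].
    have rK : regular_space K by move=> x; exact: compact_regular hK cK filterT.
    exact: cluster_lifting_lrclassQ hK rK ((compact_cluster_lifting_to_pt K).1 cK).
  exact/compact_cluster_lifting_to_pt.
Qed.
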